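(* Let $X_1,X_2,\dots$ be i.i.d. nonnegative random variables with regularly varying tail of index $\gamma\in(0,1)$, i.e. $P(X_1>t)=L(t)t^{-\gamma}$ with $L$ slowly varying at infinity. Then for every $p\in(0,1)$ and every $\varepsilon>0$ there exists $C>0$ such that for all $n\in\mathbb N$, $$E\Big[\Big(\sum_{j=1}^n\Big(\frac{X_j}{n^{1/\gamma}}\wedge n^{-p/\gamma}\Big)\Big)^2\Big]\le Cn^{-p(\frac1\gamma-1)+\varepsilon}.$$
   Context: A function $L:\mathbb R_+\to\mathbb R_+$ is slowly varying at infinity if $L(at)/L(t)\to1$ as $t\to\infty$ for every $a>0$. *)

From HB Require Import structures.
From mathcomp Require Import all_boot all_order all_algebra.
From mathcomp Require Import all_classical all_reals all_analysis.
Set Implicit Arguments. Unset Strict Implicit. Unset Printing Implicit Defensive.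
Import Order.TTheory GRing.Theory Num.Theory.
Import numFieldNormedType.Exports.
Local Open Scope classical_set_scope.
Local Open Scope ring_scope.

Definition slowly_varying (R : realType) (L : R -> R) : Prop :=
  (forall t, 0 < t -> 0 < L t) /\
  (forall a, 0 < a -> (fun t => L (a * t) / L t) @ +oo --> (1 : R)).

Definition mutually_independent d (T : measurableType d) (R : realType)
  (P : probability T R) (X : nat -> T -> R) : Prop :=
  forall (B : nat -> set R), (forall i, measurable (B i)) ->
  forall s : seq nat, uniq s ->
    P (\big[setI/setT]_(i <- s) (X i @^-1` B i)) =
    (\prod_(i <- s) P (X i @^-1` B i))%E.

Definition identically_distributed d (T : measurableType d) (R : realType)
  (P : probability T R) (X : nat -> T -> R) : Prop :=
  forall n (B : set R), measurable B -> P (X n @^-1` B) = P (X 0%N @^-1` B).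

(* Potter's bound turns the regularly varying tail into P(X > t) <= C t^-(gamma - dl)
   for all t > 0, at the price of an arbitrarily small dl > 0.  With a = n^(1/gamma)
   and b = n^(-p/gamma), the truncation min(x/a, b) is dominated by the dyadic step
   function  sum_(k < K) b 2^-k 1{x > a b 2^-(k+1)} + b 2^-K,  where 2^-K <= (ab)^-(gamma-dl).
   Its values are at most 2b and, by the tail bound and a geometric series, its mean u
   is O(b (ab)^-(gamma-dl)).  Since independence is the product rule for events, the
   mixed moments of such step functions of X_i, X_j factor, so the second moment of the
   sum is at most 2nbu + (nu)^2, and nu = O(n^(-p(1/gamma-1) + (1-p) dl/gamma)). *)

From HB Require Import structures.
From mathcomp Require Import all_boot all_order all_algebra.
From mathcomp Require Import all_classical all_reals all_analysis.
From mathcomp Require Import measurable_realfun ring lra.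
Set Implicit Arguments. Unset Strict Implicit. Unset Printing Implicit Defensive.
Import Order.TTheory GRing.Theory Num.Theory.
Import numFieldNormedType.Exports.
Local Open Scope classical_set_scope.
Local Open Scope ring_scope.

Section powR_lemmas.
Variable R : realType.

Lemma one_lt_powR (a g : R) : 1 < a -> 0 < g -> 1 < a `^ g.
Proof.
move=> a1 g0; rewrite /powR gt_eqF ?(lt_trans ltr01) //.
by rewrite -expR0 ltr_expR mulr_gt0 // ln_gt0.
Qed.

Lemma powR_lt_self (a g : R) : 1 < a -> g < 1 -> a `^ g < a.
Proof.
move=> a1 g1; rewrite /powR gt_eqF ?(lt_trans ltr01) //.
by rewrite -[ltRHS]lnK ?posrE ?(lt_trans ltr01) // ltr_expR gtr_pMl // ln_gt0.
Qed.

Lemma powR_exprVn_half (g : R) m : (2^-1 ^+ m) `^ (- g) = 2 `^ g ^+ m.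
Proof.
rewrite exprVn -powR_invn // -powRrM -powR_mulrn ?powR_ge0 // -powRrM.
by congr (_ `^ _); ring.
Qed.

End powR_lemmas.

Section slowly_varying_bounds.
Variable R : realType.
Implicit Types (L F : R -> R) (t : R).

Lemma slowly_varying_doubling L (dl : R) : slowly_varying L -> 0 < dl ->
  exists t0, 0 < t0 /\ forall t, t0 <= t -> L (2 * t) <= 2 `^ dl * L t.
Proof.
move=> [L_gt0 L_ratio] dl0.
have two_gt0 : (0 : R) < 2 by [].
have two_gt1 : (1 : R) < 2 by rewrite ltr1n.
have [t1 [_ ratio_lt]] := cvgr_lt _ (L_ratio 2 two_gt0) _ (one_lt_powR two_gt1 dl0).
exists (Num.max (t1 + 1) 1); split=> [|t t1t]; first by rewrite lt_max ltr01 orbT.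
have t_gt0 : 0 < t by apply: lt_le_trans t1t; rewrite lt_max ltr01 orbT.
have t1_lt_t : t1 < t by apply: lt_le_trans t1t; rewrite lt_max ltrDl ltr01.
by have /ltW := ratio_lt t t1_lt_t; rewrite ler_pdivrMr // L_gt0.
Qed.

Lemma doubling_le_powR L (t0 K dl : R) : 0 < t0 ->
  (forall t, t0 <= t -> L (2 * t) <= 2 `^ dl * L t) ->
  (forall t, t0 <= t <= 2 * t0 -> L t <= K * t `^ dl) ->
  forall t, t0 <= t -> L t <= K * t `^ dl.
Proof.
move=> t0_gt0 L_double L_base.
suff L_le m t : t0 <= t <= (m%:R + 2) * t0 -> L t <= K * t `^ dl.
  move=> t t0t; apply: (L_le (Num.trunc (t / t0))); rewrite t0t /=.
  by have := truncnS_gt (t / t0); rewrite -natr1 ltr_pdivrMr //; lra.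
elim: m t => [|m IH] t /andP[t0t tm]; first by apply: L_base; rewrite t0t; lra.
have [t_le|t_gt] := leP t (2 * t0); first by apply: L_base; rewrite t0t.
have -> : t = 2 * (t / 2) by field.
apply: le_trans (L_double _ _) _; first lra.
rewrite powRM ?divr_ge0 //; last lra.
rewrite mulrCA ler_pM2l ?powR_gt0 // IH //.
by move: tm; rewrite -natr1 => tm; apply/andP; split; nra.
Qed.

Lemma slowly_varying_tail_le L F (g dl : R) :
  slowly_varying L -> 0 < dl -> dl <= g ->
  (forall t, 0 < t -> F t <= 1) ->
  (forall t, 0 < t -> F t = L t * t `^ (- g)) ->
  exists C, 0 < C /\ forall t, 0 < t -> F t <= C * t `^ (- (g - dl)).
Proof.
move=> L_sv dl_gt0 dl_le_g F_le1 F_def.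
have [t0 [t0_gt0 L_double]] := slowly_varying_doubling L_sv dl_gt0.
(* Slow variation alone does not bound L locally; F <= 1 does. *)
have L_le t : 0 < t -> L t <= t `^ g.
  move=> t_gt0; have := F_le1 t t_gt0.
  by rewrite F_def // powRN ler_pdivrMr ?powR_gt0 // mul1r.
pose K := (2 * t0) `^ g / t0 `^ dl.
have L_base t : t0 <= t <= 2 * t0 -> L t <= K * t `^ dl.
  move=> /andP[t0t t2t0]; apply: le_trans (L_le t _) _; first lra.
  rewrite /K mulrAC ler_pdivlMr ?powR_gt0 //.
  apply: ler_pM; rewrite ?powR_ge0 //; apply: ge0_ler_powR; rewrite ?nnegrE; lra.
exists (K + t0 `^ (g - dl)); split.
  by rewrite ltr_wpDr ?powR_ge0 // divr_gt0 ?powR_gt0 ?mulr_gt0.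
move=> t t_gt0; rewrite mulrDl.
have [t0t|tt0] := leP t0 t.
  rewrite F_def // ler_wpDr ?mulr_ge0 ?powR_ge0 //.
  rewrite (_ : - (g - dl) = dl + - g); last by ring.
  rewrite powRD ?(gt_eqF t_gt0) ?implybT // mulrA ler_wpM2r ?powR_ge0 //.
  exact: (doubling_le_powR t0_gt0 L_double L_base t0t).
rewrite ler_wpDl ?mulr_ge0 ?powR_ge0 ?invr_ge0 ?powR_ge0 //.
apply: le_trans (F_le1 t t_gt0) _.
rewrite powRN ler_pdivlMr ?powR_gt0 // mul1r.
by apply: ge0_ler_powR; rewrite ?nnegrE ?subr_ge0 //; apply: ltW.
Qed.

End slowly_varying_bounds.

Section dyadic_decomposition.
Variable R : realType.

Lemma minr_le_split (x y z : R) : 0 <= x -> 0 <= z <= y ->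
  Num.min x y <= y * ((z < x)%R)%:R + Num.min x z.
Proof.
move=> x_ge0 /andP[z_ge0 zy]; have [zx|xz] := ltP z x.
  by rewrite mulr1 ler_wpDr ?le_min ?x_ge0 ?z_ge0 // ge_min lexx orbT.
by rewrite mulr0 add0r !(min_idPl _) //; apply: le_trans zy.
Qed.

Lemma minr_le_dyadic_sum (x M r : R) (K : nat) : 0 <= x -> 0 <= M -> 0 <= r <= 1 ->
  Num.min x M <= \sum_(k < K) M * r ^+ k * ((M * r ^+ k.+1 < x)%R)%:R + M * r ^+ K.
Proof.
move=> x_ge0 M_ge0 /andP[r_ge0 r_le1].
suff : Num.min x M <=
    \sum_(k < K) M * r ^+ k * ((M * r ^+ k.+1 < x)%R)%:R + Num.min x (M * r ^+ K).
  by move/le_trans; apply; rewrite lerD2l ge_min lexx orbT.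
elim: K => [|K IH]; first by rewrite big_ord0 add0r expr0 mulr1.
rewrite big_ord_recr /= -addrA; apply: le_trans IH _; rewrite lerD2l.
apply: minr_le_split => //; rewrite exprS mulrCA !mulr_ge0 ?exprn_ge0 //=.
by rewrite ler_piMl ?mulr_ge0 ?exprn_ge0.
Qed.

Lemma dyadic_tail_sum_le (b M C g : R) (K : nat) (pr : nat -> R) :
  0 <= b -> 0 <= M -> 0 <= C -> g < 1 ->
  2^-1 ^+ K <= M `^ (- g) -> pr K <= 1 ->
  (forall k, (k < K)%N -> pr k <= C * (M * 2^-1 ^+ k.+1) `^ (- g)) ->
  \sum_(k < K.+1) b * 2^-1 ^+ k * pr k <=
    (C * 2 `^ g / (1 - 2 `^ g / 2) + 1) * (b * M `^ (- g)).
Proof.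
move=> b_ge0 M_ge0 C_ge0 g_lt1 K_large prK_le1 pr_le.
have half_ge0 : 0 <= 2^-1 :> R by rewrite invr_ge0.
have q_lt1 : 2 `^ g / 2 < 1 :> R.
  by rewrite ltr_pdivrMr // mul1r powR_lt_self // ltr1n.
pose A := C * 2 `^ g * (b * M `^ (- g)).
rewrite big_ord_recr /= mulrDl mul1r; apply: lerD.
  apply: (@le_trans _ _ (series (geometric A (2 `^ g / 2)) K)).
    rewrite /series /= big_mkord; apply: ler_sum => k _.
    apply: le_trans (ler_wpM2l _ (pr_le k (ltn_ord k))) _.
      by rewrite mulr_ge0 ?exprn_ge0.
    rewrite powRM ?exprn_ge0 // powR_exprVn_half /geometric /A exprS.
    by rewrite mulrC exprMn exprVn le_eqVlt; apply/predU1P; left; ring.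
  rewrite [leRHS]mulrAC; apply: geometric_le_lim.
  - by rewrite /A !mulr_ge0 ?powR_ge0.
  - by rewrite divr_gt0 ?powR_gt0.
  - by rewrite ger0_norm ?divr_ge0 ?powR_ge0.
apply: le_trans (_ : b * 2^-1 ^+ K <= _).
  by rewrite -[leRHS]mulr1 ler_wpM2l ?mulr_ge0 ?exprn_ge0.
exact: ler_wpM2l.
Qed.

Lemma exists_expr_half_le (y : R) : 0 < y -> exists K : nat, 2^-1 ^+ K <= y.
Proof.
move=> y_gt0; exists (Num.trunc y^-1); rewrite exprVn -[leRHS]invrK.
rewrite lef_pV2 ?posrE ?invr_gt0 ?exprn_gt0 //.
apply: le_trans (ltW (truncnS_gt _)) _; rewrite -natrX ler_nat.
exact: ltn_expl.
Qed.

(* The last set is the whole line: it carries the constant term b 2^-K. *)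
Definition dyadic_set (a b : R) (K k : nat) : set R :=
  if (k < K)%N then [set y | a * b * 2^-1 ^+ k.+1 < y] else setT.

Lemma measurable_dyadic_set a b K k : measurable (dyadic_set a b K k).
Proof.
by rewrite /dyadic_set; case: ifP => _ //; rewrite -set_itvoy.
Qed.

Lemma minr_div_le_dyadic_step (a b x : R) (K : nat) : 0 < a -> 0 <= b -> 0 <= x ->
  Num.min (x / a) b <= \sum_(k < K.+1) b * 2^-1 ^+ k * \1_(dyadic_set a b K k) x.
Proof.
move=> a_gt0 b_ge0 x_ge0.
have half_01 : 0 <= (2 : R)^-1 <= 1 by rewrite invr_ge0 ler0n invf_le1 ?ler1n.
apply: le_trans (minr_le_dyadic_sum K _ b_ge0 half_01) _; first exact: divr_ge0 (ltW _).
rewrite big_ord_recr /= /dyadic_set ltnn indicT mulr1 lerD2r.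
rewrite le_eqVlt; apply/predU1P; left; apply: eq_bigr => k _.
rewrite ltn_ord indicE; congr (_ * _%:R).
by rewrite ltr_pdivlMr // [_ * a]mulrC mulrA mem_setE.
Qed.

End dyadic_decomposition.

Section probability_lemmas.
Context d (T : measurableType d) (R : realType) (P : probability T R).

Lemma fine_probability_le1 (A : set T) : measurable A -> fine (P A) <= 1.
Proof.
by move=> mA; rewrite -lee_fin fineK ?fin_num_measure ?probability_le1.
Qed.

Lemma regularly_varying_tail_le (Y : {RV P >-> R}) (gamma dl : R) :
  0 < dl -> dl <= gamma ->
  (exists L, slowly_varying L /\
     forall t, 0 < t -> P [set w | t < Y w] = (L t * t `^ (- gamma))%:E) ->
  exists C, 0 < C /\
    forall t, 0 < t -> fine (P [set w | t < Y w]) <= C * t `^ (- (gamma - dl)).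
Proof.
move=> dl_gt0 dl_le_gamma [L [L_sv Y_tail]].
apply: (slowly_varying_tail_le L_sv dl_gt0 dl_le_gamma) => [t _|t t_gt0].
  apply: fine_probability_le1.
  rewrite (_ : [set w | t < Y w] = Y @^-1` `]t, +oo[); first exact: measurable_funPTI.
  by rewrite set_itvoy.
by rewrite Y_tail.
Qed.

Lemma expectation_indic_sum (I : finType) (w : I -> R) (A : I -> set T) :
  (forall k, 0 <= w k) -> (forall k, measurable (A k)) ->
  ('E_P[(fun x => \sum_k w k * \1_(A k) x)%R] = (\sum_k w k * fine (P (A k)))%:E)%E.
Proof.
move=> w_ge0 mA; rewrite unlock /=.
under eq_integral do rewrite -sumEFin.
rewrite ge0_integral_sum //=; last 2 first.
- by move=> k; apply/measurable_EFinP/measurable_funM => //; exact: measurable_indic.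
- by move=> k x _; rewrite lee_fin mulr_ge0 // indic_ge0.
rewrite -sumEFin; apply: eq_bigr => k _.
under eq_integral do rewrite EFinM.
rewrite ge0_integralZl_EFin //; last exact/measurable_EFinP/measurable_indic.
by rewrite integral_indic // setIT EFinM fineK ?fin_num_measure.
Qed.

Lemma expectation_indic_sum_mul (I J : finType) (w : I -> R) (A : I -> set T)
    (v : J -> R) (B : J -> set T) :
  (forall k, 0 <= w k) -> (forall k, measurable (A k)) ->
  (forall l, 0 <= v l) -> (forall l, measurable (B l)) ->
  (forall k l, P (A k `&` B l) = (P (A k) * P (B l))%E) ->
  ('E_P[(fun x => (\sum_k w k * \1_(A k) x) * (\sum_l v l * \1_(B l) x))%R] =
   ((\sum_k w k * fine (P (A k))) * (\sum_l v l * fine (P (B l))))%:E)%E.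
Proof.
move=> w_ge0 mA v_ge0 mB AB_indep.
have -> : (fun x => (\sum_k w k * \1_(A k) x) * (\sum_l v l * \1_(B l) x)) =
    (fun x => \sum_(kl : I * J) w kl.1 * v kl.2 * \1_(A kl.1 `&` B kl.2) x).
  apply/funext => x; rewrite big_distrlr /= pair_big /=.
  by apply: eq_bigr => -[k l] _; rewrite indicI mulrACA.
rewrite expectation_indic_sum => [|kl|kl]; last 2 first.
- by rewrite mulr_ge0.
- exact: measurableI.
rewrite big_distrlr /= pair_big /=; congr EFin; apply: eq_bigr => -[k l] _ /=.
by rewrite AB_indep fineM ?fin_num_measure // mulrACA.
Qed.

End probability_lemmas.

Lemma sum_delta_seq (R : pzSemiRingType) (s : seq nat) (x y : R) : uniq s ->
  \sum_(i <- s) \sum_(j <- s) ((i == j)%:R * x + y) =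
  (size s)%:R * x + (size s)%:R ^+ 2 * y.
Proof.
move=> s_uniq; have sum_const z : \sum_(i <- s) z = (size s)%:R * z.
  by rewrite big_const_seq count_predT iter_addr_0 mulr_natl.
rewrite big_seq (eq_bigr (fun=> x + (size s)%:R * y)) => [|i si].
  by rewrite -big_seq sum_const mulrDr mulrA -expr2.
rewrite big_split /= sum_const (bigD1_seq i) //= eqxx mul1r big1 ?addr0 // => j ji.
by rewrite eq_sym (negbTE ji) mul0r.
Qed.

Section iid_step_functions.
Context d (T : measurableType d) (R : realType) (P : probability T R)
  (X : nat -> {RV P >-> R}).
Hypotheses (X_indep : mutually_independent P (fun n => X n))
  (X_id : identically_distributed P (fun n => X n)).
Variables (I : finType) (c : I -> R) (B : I -> set R).
Hypotheses (c_ge0 : forall k, 0 <= c k) (mB : forall k, measurable (B k)).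

Let f (x : R) : R := \sum_k c k * \1_(B k) x.
Let mean : R := \sum_k c k * fine (P (X 0 @^-1` B k)).

Let f_X j w : f (X j w) = \sum_k c k * \1_(X j @^-1` B k) w.
Proof. by []. Qed.

Let f_ge0 x : 0 <= f x.
Proof. by apply: sumr_ge0 => k _; rewrite mulr_ge0 ?indic_ge0. Qed.

Let f_le_sum x : f x <= \sum_k c k.
Proof. by apply: ler_sum => k _; rewrite ler_piMr ?indic_le1. Qed.

Let measurable_f_X j : measurable_fun setT (fun w => f (X j w)).
Proof.
apply: measurable_sum => k; apply: measurable_funM => //.
exact/measurable_indic/measurable_funPTI.
Qed.

Let prob_X j k : fine (P (X j @^-1` B k)) = fine (P (X 0 @^-1` B k)).
Proof. by rewrite X_id. Qed.

Lemma expectation_mul_step_iid i j : i != j ->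
  ('E_P[(fun w => f (X i w) * f (X j w))%R] = (mean ^+ 2)%:E)%E.
Proof.
move=> ij; rewrite expectation_indic_sum_mul // => [|k|k|k l].
- by rewrite expr2 /mean; congr (_ * _)%:E; apply: eq_bigr => k _; rewrite prob_X.
- exact: measurable_funPTI.
- exact: measurable_funPTI.
have := @X_indep (fun m => if m == i then B k else B l) _ [:: i; j].
rewrite !big_cons !big_nil setIT mule1 eqxx eq_sym (negbTE ij); apply.
  by move=> m; case: ifP.
by rewrite /= inE ij.
Qed.

Lemma expectation_sqr_step_le i :
  ('E_P[(fun w => f (X i w) * f (X i w))%R] <= ((\sum_k c k) * mean)%:E)%E.
Proof.
have -> : ((\sum_k c k) * mean)%:E =
    ('E_P[(fun w => \sum_k (\sum_k c k) * c k * \1_(X i @^-1` B k) w)%R])%E.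
  rewrite expectation_indic_sum => [|k|k]; last 2 first.
  - by rewrite mulr_ge0 ?sumr_ge0.
  - exact: measurable_funPTI.
  by rewrite /mean mulr_sumr; congr EFin; apply: eq_bigr => k _; rewrite prob_X mulrA.
rewrite unlock; apply: ge0_le_integral => //.
- by move=> w _; rewrite lee_fin mulr_ge0.
- exact/measurable_EFinP/measurable_funM.
- apply/measurable_EFinP/measurable_sum => k; apply: measurable_funM => //.
  exact/measurable_indic/measurable_funPTI.
move=> w _; rewrite lee_fin.
under [leRHS]eq_bigr do rewrite -mulrA.
by rewrite -mulr_sumr -f_X ler_wpM2r.
Qed.

Let expectation_sum_sqr (s : seq nat) :
  ('E_P[(fun w => (\sum_(j <- s) f (X j w)) ^+ 2)%R] =
   \sum_(i <- s) \sum_(j <- s) 'E_P[(fun w => f (X i w) * f (X j w))%R])%E.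
Proof.
rewrite unlock.
under eq_integral do rewrite expr2 big_distrlr /= -sumEFin.
rewrite ge0_integral_sum //; last 2 first.
- by move=> i; apply/measurable_EFinP/measurable_sum => j; exact: measurable_funM.
- by move=> i w _; rewrite lee_fin; apply: sumr_ge0 => j _; rewrite mulr_ge0.
apply: eq_bigr => i _; under eq_integral do rewrite -sumEFin.
rewrite ge0_integral_sum // => [j|j w _]; last by rewrite lee_fin mulr_ge0.
exact/measurable_EFinP/measurable_funM.
Qed.

Lemma dominated_sum_second_moment_le (Y : nat -> T -> R) (s : seq nat) :
  uniq s -> (forall j, measurable_fun setT (Y j)) ->
  (forall j w, 0 <= Y j w <= f (X j w)) ->
  ('E_P[(fun w => (\sum_(j <- s) Y j w) ^+ 2)%R] <=
   ((size s)%:R * ((\sum_k c k) * mean) + (size s)%:R ^+ 2 * mean ^+ 2)%:E)%E.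
Proof.
move=> s_uniq mY Y_le_f.
apply: (@le_trans _ _ ('E_P[(fun w => (\sum_(j <- s) f (X j w)) ^+ 2)%R])%E).
  rewrite unlock; apply: ge0_le_integral => //.
  - by move=> w _; rewrite lee_fin sqr_ge0.
  - exact/measurable_EFinP/measurable_funX/measurable_sum.
  - exact/measurable_EFinP/measurable_funX/measurable_sum.
  move=> w _; rewrite lee_fin ler_sqr ?nnegrE; last 2 first.
  - by apply: sumr_ge0 => j _; case/andP: (Y_le_f j w).
  - exact: sumr_ge0.
  by apply: ler_sum => j _; case/andP: (Y_le_f j w).
rewrite expectation_sum_sqr -sum_delta_seq // -sumEFin.
apply: lee_sum => i _; rewrite -sumEFin; apply: lee_sum => j _.
have [<-|ij] := eqVneq i j.
  by apply: le_trans (expectation_sqr_step_le i) _; rewrite lee_fin mul1r lerDl sqr_ge0.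
by rewrite expectation_mul_step_iid // mul0r add0r.
Qed.

End iid_step_functions.

Lemma powR_truncation_scale (R : realType) (n gamma p g : R) : 0 < n -> gamma != 0 ->
  n * (n `^ (- (p / gamma)) * (n `^ (1 / gamma) * n `^ (- (p / gamma))) `^ (- g)) =
  n `^ (1 - (p + (1 - p) * g) / gamma).
Proof.
move=> n_gt0 gamma_neq0.
have powRnD x y : n `^ (x + y) = n `^ x * n `^ y.
  by rewrite powRD ?(gt_eqF n_gt0) ?implybT.
rewrite -powRnD -powRrM -[X in X * _](powRr1 (ltW n_gt0)) -!powRnD.
by congr (_ `^ _); field.
Qed.

Section truncated_iid_sums.
Context d (T : measurableType d) (R : realType) (P : probability T R)
  (X : nat -> {RV P >-> R}).
Hypotheses (X_indep : mutually_independent P (fun n => X n))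
  (X_id : identically_distributed P (fun n => X n)) (X_ge0 : forall n w, 0 <= X n w).
Variables (C g : R).
Hypotheses (C_ge0 : 0 <= C) (g_lt1 : g < 1)
  (X_tail_le : forall t, 0 < t -> fine (P [set w | t < X 0 w]) <= C * t `^ (- g)).

Let D := C * 2 `^ g / (1 - 2 `^ g / 2) + 1.

Lemma truncated_sum_second_moment_le (a b : R) (s : seq nat) :
  0 < a -> 0 < b -> uniq s ->
  ('E_P[(fun w => (\sum_(j <- s) Num.min (X j w / a) b) ^+ 2)%R] <=
   ((size s)%:R * (2 * b * (D * (b * (a * b) `^ (- g)))) +
    (size s)%:R ^+ 2 * (D * (b * (a * b) `^ (- g))) ^+ 2)%:E)%E.
Proof.
move=> a_gt0 b_gt0 s_uniq.
have [K K_large] := exists_expr_half_le (powR_gt0 (- g) (mulr_gt0 a_gt0 b_gt0)).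
pose c (k : 'I_K.+1) := b * 2^-1 ^+ k.
have c_ge0 k : 0 <= c k by rewrite mulr_ge0 ?exprn_ge0 ?invr_ge0 ?ltW.
apply: le_trans (dominated_sum_second_moment_le X_indep X_id c_ge0
  (fun k => measurable_dyadic_set a b K k) s_uniq _ _) _.
- move=> j; apply: measurable_minr => //.
  by apply: measurable_funM.
- move=> j w; rewrite le_min divr_ge0 ?X_ge0 ?(ltW a_gt0) ?(ltW b_gt0) //=.
  exact: minr_div_le_dyadic_step (ltW b_gt0) (X_ge0 j w).
have weights_le : \sum_k c k <= 2 * b.
  have -> : 2 * b = b / (1 - 2^-1) by field.
  rewrite (_ : \sum_k c k = series (geometric b 2^-1) K.+1).
    by apply: geometric_le_lim; rewrite ?ger0_norm ?invr_gt0 ?invf_lt1 ?ltr1n ?ltW.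
  by rewrite /series /= big_mkord.
pose pr k := fine (P (X 0 @^-1` dyadic_set a b K k)).
have mean_ge0 : 0 <= \sum_k c k * pr k.
  by apply: sumr_ge0 => k _; rewrite mulr_ge0 ?fine_ge0 ?measure_ge0.
have mean_le : \sum_k c k * pr k <= D * (b * (a * b) `^ (- g)).
  apply: dyadic_tail_sum_le => //.
  - exact: ltW.
  - by rewrite mulr_ge0 ?ltW.
  - by rewrite /pr /dyadic_set ltnn preimage_setT probability_setT.
  - move=> k kK; rewrite /pr /dyadic_set kK; apply: X_tail_le.
    by rewrite !mulr_gt0 ?exprn_gt0 ?invr_gt0.
rewrite lee_fin lerD ?ler_wpM2l ?exprn_ge0 //.
- exact: ler_pM (sumr_ge0 _ (fun k _ => c_ge0 k)) mean_ge0 weights_le mean_le.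
- by rewrite !expr2; apply: ler_pM.
Qed.

Let D_gt0 : 0 < D.
Proof.
rewrite ltr_pwDr // divr_ge0 ?mulr_ge0 ?powR_ge0 // subr_ge0.
by rewrite ler_pdivrMr // mul1r ltW // powR_lt_self // ltr1n.
Qed.

Lemma truncated_sum_second_moment_rate (gamma p tau : R) :
  0 < gamma -> 0 <= p ->
  1 - (p + (1 - p) * g) / gamma <= tau -> (1 - (p + (1 - p) * g) / gamma) *+ 2 <= tau ->
  exists K, 0 < K /\ forall n : nat, (0 < n)%N ->
    ('E_P[(fun w => (\sum_(1 <= j < n.+1)
        Num.min (X j w / n%:R `^ (1 / gamma)) (n%:R `^ (- (p / gamma)))) ^+ 2)%R] <=
     (K * n%:R `^ tau)%:E)%E.
Proof.
move=> gamma_gt0 p_ge0 e_le e2_le; exists (2 * D + D ^+ 2).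
split=> [|n n_gt0]; first by rewrite addr_gt0 ?mulr_gt0 ?exprn_gt0.
have n_ge1 : 1 <= n%:R :> R by rewrite ler1n.
have n_pos : 0 < n%:R :> R by rewrite ltr0n.
apply: le_trans (truncated_sum_second_moment_le (powR_gt0 _ n_pos) (powR_gt0 _ n_pos)
  (iota_uniq 1 (n.+1 - 1))) _.
rewrite size_iota subn1 /= lee_fin.
have := powR_truncation_scale p g n_pos (lt0r_neq0 gamma_gt0).
set b := n%:R `^ (- (p / gamma)); set V := b * _ => nV.
have b_le1 : b <= 1 by rewrite -(powRr0 n%:R) ler_powR // oppr_le0 divr_ge0 // ltW.
have -> : n%:R * (2 * b * (D * V)) + n%:R ^+ 2 * (D * V) ^+ 2 =
  2 * D * (b * (n%:R * V)) + D ^+ 2 * (n%:R * V) ^+ 2 by ring.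
rewrite nV [leRHS]mulrDl; apply: lerD; rewrite ler_wpM2l ?exprn_ge0 ?mulr_ge0 ?(ltW D_gt0) //.
  by apply: le_trans (ler_powR n_ge1 e_le); rewrite ler_piMl ?powR_ge0.
by rewrite -powR_mulrn ?powR_ge0 // -powRrM ler_powR // mulr_natr.
Qed.

End truncated_iid_sums.

Theorem lemmaA3 (d : measure_display) (T : measurableType d) (R : realType)
  (P : probability T R) (X : nat -> {RV P >-> R}) (gamma : R) :
  0 < gamma < 1 ->
  mutually_independent P (fun n => X n) ->
  identically_distributed P (fun n => X n) ->
  (forall n w, 0 <= X n w) ->
  (exists L : R -> R, slowly_varying L /\
     forall t, 0 < t -> P [set w | t < X 0%N w] = (L t * t `^ (- gamma))%:E) ->
  forall p eps : R, 0 < p < 1 -> 0 < eps ->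
  exists C : R, 0 < C /\
    forall n : nat, (0 < n)%N ->
      ('E_P[fun w => ((\sum_(1 <= j < n.+1)
           Num.min (X j w / n%:R `^ (1 / gamma)) (n%:R `^ (- (p / gamma)))) ^+ 2)%R]
       <= (C * n%:R `^ (- (p * (1 / gamma - 1)) + eps))%:E)%E.
Proof.
move=> /andP[gamma_gt0 gamma_lt1] X_indep X_id X_ge0 X_tail p eps.
move=> /andP[p_gt0 p_lt1] eps_gt0.
pose dl := Num.min (gamma / 2) (eps * gamma / 2).
have dl_gt0 : 0 < dl by rewrite lt_min !divr_gt0 ?mulr_gt0.
have dl_le_gamma : dl <= gamma by rewrite ge_min; apply/orP; left; lra.
have dl_le_eps : (1 - p) * dl / gamma <= eps / 2.
  have : dl <= eps * gamma / 2 by rewrite ge_min lexx orbT.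
  by rewrite ler_pdivrMr //; nra.
have [C0 [C0_gt0 tail_le]] := regularly_varying_tail_le dl_gt0 dl_le_gamma X_tail.
have rate_ge0 : 0 <= p * (1 / gamma - 1).
  by rewrite mulr_ge0 ?(ltW p_gt0) // subr_ge0 ler_pdivlMr // mul1r ltW.
have rate_eq : 1 - (p + (1 - p) * (gamma - dl)) / gamma =
    - (p * (1 / gamma - 1)) + (1 - p) * dl / gamma.
  by field; rewrite gt_eqF.
apply: (truncated_sum_second_moment_rate X_indep X_id X_ge0 (ltW C0_gt0) _ tail_le);
  rewrite ?(ltW p_gt0) ?mulr2n //; lra.
Qed.
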